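(* Let $(X,d)$ be a compact metric space, $f_{0,\infty}=\{f_n\}_{n=0}^\infty$ a sequence of continuous self-maps of $X$, and $A\in\mathcal{S}$. For $k\ge1$ let $f^{(k)}_{0,\infty}=\{f_n\times\cdots\times f_n\ (k\text{ factors})\}_{n=0}^\infty$ acting on $X^k$ with the metric $d_k((x_i),(y_i))=\max_{1\le i\le k}d(x_i,y_i)$. Then \[h_A(f_{0,\infty}^{(k)})=k\,h_A(f_{0,\infty}),\quad k\geq1.\]
   Context: For a sequence $\{f_n\}$ of continuous self-maps of a compact metric space: $f_i^n=f_{i+n-1}\circ\cdots\circ f_i$, $f_i^0=\mathrm{id}$, $f_i^{-n}(B)=(f_i^n)^{-1}(B)$. $\mathcal S$ is the set of strictly increasing sequences $A=\{a_i\}_{i\ge1}$ of nonnegative integers. The topological sequence entropy along $A$ is $h_A(f_{0,\infty})=\sup_{\mathscr A}\limsup_{n\to\infty}\frac1n\log\mathcal N(\bigvee_{i=1}^n f_0^{-a_i}\mathscr A)$ over finite open covers $\mathscr A$, where $\bigvee$ is the common refinement $\{\bigcap_i U_i\}$, $f_0^{-a}\mathscr A=\{f_0^{-a}U:U\in\mathscr A\}$ and $\mathcal N$ the minimal cardinality of a subcover; values lie in $[0,\infty]$. *)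

From HB Require Import structures.
From mathcomp Require Import all_boot all_order all_algebra.
From mathcomp Require Import all_classical all_reals all_analysis.
Set Implicit Arguments. Unset Strict Implicit. Unset Printing Implicit Defensive.
Import Order.TTheory GRing.Theory Num.Theory.
Local Open Scope classical_set_scope.
Local Open Scope ring_scope.

Section SeqEntropy.
Context (R : realType) (T : topologicalType).

Fixpoint fiter (f : nat -> T -> T) (n : nat) : T -> T :=
  match n with
  | 0 => id
  | n'.+1 => f n' \o fiter f n'
  end.

Definition open_cover (C : set (set T)) : Prop :=
  finite_set C /\ (forall U, C U -> open U) /\ \bigcup_(U in C) U = setT.

Definition cover_num (C : set (set T)) : R :=
  inf [set n%:R | n in [set n : nat |
        exists D : 'I_n -> set T, (forall i, C (D i)) /\ \bigcup_i D i = setT]].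

Definition pre_cover (g : T -> T) (C : set (set T)) : set (set T) :=
  [set g @^-1` U | U in C].

Definition joinc (F : nat -> set (set T)) (n : nat) : set (set T) :=
  [set S | exists V : nat -> set T,
     (forall i, (i < n)%N -> F i (V i)) /\ S = \bigcap_(i < n) V i].

(* topological sequence entropy along A = {a_1 < a_2 < ...}, here a 0 = a_1 *)
Definition seq_entropy (f : nat -> T -> T) (a : nat -> nat) : \bar R :=
  ereal_sup [set limn_esup (fun n : nat =>
      ((ln (cover_num (joinc (fun i => pre_cover (fiter f (a i)) C) n)))
        / n%:R)%:E) | C in open_cover].

End SeqEntropy.

From HB Require Import structures.
From mathcomp Require Import all_boot all_order all_algebra.
From mathcomp Require Import all_classical all_reals all_analysis.
Import Order.TTheory GRing.Theory Num.Theory.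
Local Open Scope classical_set_scope.
Local Open Scope ring_scope.

Set Implicit Arguments. Unset Strict Implicit. Unset Printing Implicit Defensive.

(* Write g_i = f_0^(a_i) and N_n(C) for the cover number of the join of the
   g_i^-1 C, i < n.  If every d-ball lies in a member of C, then N_n(C) is at
   most the size of any cover of X by sets whose orbit segments
   (g_0 x, ..., g_(n-1) x) stay d-close; if the members of C have diameter
   < r, then N_n(C) is at least the size of any (n, r)-separated set, and a
   maximal such set is itself spanning.  For the max metric on X^k, products
   of such covers, resp. of separated sets, are again covers, resp. separated
   sets, of the same kind.  Hence every open cover W of X^k is matched by an
   open cover C of X with N_n(W) <= N_n(C)^k for all n, and every C by some W
   with N_n(C)^k <= N_n(W); taking logarithms, dividing by n and passing to
   limsup and sup gives the equality. *)

Section CoverNumber.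
Context (R : realType) (T : topologicalType).
Implicit Types (C : set (set T)).

Definition orbit_join (g : nat -> T -> T) n C := joinc (fun i => pre_cover (g i) C) n.

Definition subcover C (I : Type) (D : I -> set T) :=
  (forall i, C (D i)) /\ (forall x, exists i, D i x).

Lemma subcoverE C m (D : 'I_m -> set T) :
  subcover C D <-> (forall i, C (D i)) /\ \bigcup_i D i = setT.
Proof.
split=> -[CD DT]; split => //.
  by apply/seteqP; split => // x _; have [i Di] := DT x; exists i.
by move=> x; have : setT x by []; rewrite -DT => -[i _ Di]; exists i.
Qed.

Lemma subcover_enum C (I : finType) (D : I -> set T) :
  subcover C D -> subcover C (fun i : 'I_#|I| => D (enum_val i)).
Proof.
move=> [CD DT]; split=> [i|x]; first exact: CD.
by have [i Di] := DT x; exists (enum_rank i); rewrite enum_rankK.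
Qed.

Lemma cover_num_le_card C (I : finType) (D : I -> set T) :
  subcover C D -> cover_num R C <= #|I|%:R.
Proof.
move=> /subcover_enum/subcoverE CD; apply: ge_inf; first by exists 0 => _ [n _ <-].
by exists #|I| => //; exists (fun i : 'I_#|I| => D (enum_val i)).
Qed.

Lemma subcover_of_refinement C (I : finType) (D : I -> set T) :
  (forall x, exists i, D i x) ->
  (forall i, D i !=set0 -> exists2 U, C U & D i `<=` U) ->
  exists (J : finType) (E : J -> set T), subcover C E /\ (#|J| <= #|I|)%N.
Proof.
move=> DT DC; pose J := {i : I | `[< D i !=set0 >]}.
have JC (j : J) : exists U, C U /\ D (val j) `<=` U.
  by case: j => i Di /=; have /asboolP/DC[U CU DU] := Di; exists U.
have [E JE] := choice JC; exists J, E; split; last exact: leq_card val_inj.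
split=> [j|x]; first by have [] := JE j.
have [i Di] := DT x; have Ji : `[< D i !=set0 >] by apply/asboolP; exists x.
by exists (exist _ i Ji); have [_] := JE (exist _ i Ji); apply.
Qed.

Lemma cover_num_attained C :
  (exists (I : finType) (D : I -> set T), subcover C D) ->
  exists m, cover_num R C = m%:R /\ exists D : 'I_m -> set T, subcover C D.
Proof.
move=> [I [D CD]]; have : exists m, `[< exists D : 'I_m -> set T, subcover C D >].
  exists #|I|; apply/asboolP; exists (fun i : 'I_#|I| => D (enum_val i)).
  exact: subcover_enum.
case/ex_minnP => m /asboolP[Dm CDm] m_min; exists m; split; last by exists Dm.
apply/le_anti/andP; split; first by have := cover_num_le_card CDm; rewrite card_ord.
apply: lb_le_inf; first by exists m%:R; exists m => //; exists Dm; apply/subcoverE.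
move=> _ [n [E /subcoverE CE] <-]; rewrite ler_nat.
by apply: m_min; apply/asboolP; exists E.
Qed.

End CoverNumber.

Lemma compact_rV (T : topologicalType) k : (0 < k)%N ->
  compact [set: T] -> compact [set: 'rV[T]_k].
Proof.
move=> k_gt0 cT; have [[x0 _]|T0] := pselect (exists x : T, True); last first.
  suff -> : [set: 'rV[T]_k] = set0 by exact: compact0.
  by apply/seteqP; split => // v _; apply: T0; exists (v ord0 (Ordinal k_gt0)).
(* [rV_compact] is stated for pointed spaces; any point of [T] will do. *)
pose pT := HB.pack_for ptopologicalType T (isPointed.Build T x0).
have := @rV_compact pT k (fun=> setT) (fun=> cT).
by congr compact; apply/seteqP; split.
Qed.

Section PseudoMetric.
Context (R : realType) (T : pseudoMetricType R).
Implicit Types (C : set (set T)) (r d : R).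

Definition diam_lt r (U : set T) := forall y y', U y -> U y' -> ball y r y'.

Definition is_lebesgue_number C d := forall x, exists2 U, C U & ball x d `<=` U.

Section Orbits.
Variables (g : nat -> T -> T) (n : nat).

Definition orbit_close r x y := forall i, (i < n)%N -> ball (g i x) r (g i y).

Definition orbit_diam_lt r (S : set T) :=
  forall y y', S y -> S y' -> orbit_close r y y'.

Definition orbit_separated r (I : Type) (E : I -> T) :=
  forall s t, orbit_close r (E s) (E t) -> s = t.

Lemma orbit_close_sym r x y : orbit_close r x y -> orbit_close r y x.
Proof. by move=> xy i ilt; apply: ball_sym; exact: xy. Qed.

Lemma orbit_close_splitr r z y y' :
  orbit_close (r / 2) z y -> orbit_close (r / 2) z y' -> orbit_close r y y'.
Proof. by move=> zy zy' i ilt; exact: ball_splitr (zy i ilt) (zy' i ilt). Qed.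

Lemma orbit_itinerary r p (c : 'I_p -> T) x :
  (forall y, exists j, ball (c j) r y) ->
  exists tau : {ffun 'I_n -> 'I_p}, forall o : 'I_n, ball (c (tau o)) r (g o x).
Proof.
move=> cP; have [tau tauP] := choice (fun o : 'I_n => cP (g o x)).
by exists [ffun o => tau o] => o; rewrite ffunE.
Qed.

Lemma orbit_join_diam C r S :
  (forall U, C U -> diam_lt r U) -> orbit_join g n C S -> orbit_diam_lt r S.
Proof.
move=> Cr [V [CV ->]] y y' Sy Sy' i ilt; have [U CU UV] := CV i ilt.
by apply: (Cr _ CU); [move: (Sy i ilt) | move: (Sy' i ilt)]; rewrite -UV.
Qed.

Lemma orbit_diam_sub_join C d S : is_lebesgue_number C d -> S !=set0 ->
  orbit_diam_lt d S -> exists2 S', orbit_join g n C S' & S `<=` S'.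
Proof.
move=> Cd [y0 Sy0] Sd; have CdP x : exists U, C U /\ ball x d `<=` U.
  by have [U CU dU] := Cd x; exists U.
have [L LP] := choice CdP; exists (\bigcap_(i < n) g i @^-1` L (g i y0)).
  exists (fun i => g i @^-1` L (g i y0)); split => // i _.
  by exists (L (g i y0)) => //; have [] := LP (g i y0).
by move=> y Sy i ilt; have [_] := LP (g i y0); apply; exact: Sd.
Qed.

Lemma orbit_join_refinement C d (I : finType) (D : I -> set T) :
  is_lebesgue_number C d -> (forall x, exists i, D i x) ->
  (forall i, orbit_diam_lt d (D i)) ->
  exists (J : finType) (E : J -> set T),
    subcover (orbit_join g n C) E /\ (#|J| <= #|I|)%N.
Proof.
move=> Cd DT Dd; apply: subcover_of_refinement => // i Di.
exact: orbit_diam_sub_join Cd Di (Dd i).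
Qed.

Lemma cover_num_orbit_join_le C d (I : finType) (D : I -> set T) :
  is_lebesgue_number C d -> (forall x, exists i, D i x) ->
  (forall i, orbit_diam_lt d (D i)) -> cover_num R (orbit_join g n C) <= #|I|%:R.
Proof.
move=> Cd DT Dd; have [J [E [CE JI]]] := orbit_join_refinement Cd DT Dd.
by apply: le_trans (cover_num_le_card R CE) _; rewrite ler_nat.
Qed.

Lemma orbit_separated_card_le r p (c : 'I_p -> T) (I : finType) (E : I -> T) :
  (forall x, exists j, ball (c j) (r / 2) x) -> orbit_separated r E ->
  (#|I| <= p ^ n)%N.
Proof.
move=> cP Esep; have [tau tauP] := choice (fun s => orbit_itinerary (E s) cP).
suff tau_inj : injective tau.
  by rewrite -[p]card_ord -[n]card_ord -card_ffun; exact: leq_card tau_inj.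
move=> s t tau_st; apply: Esep => i ilt; have := tauP t (Ordinal ilt).
by rewrite -tau_st; exact: ball_splitr (tauP s (Ordinal ilt)).
Qed.

End Orbits.

Hypothesis compactT : compact [set: T].

Lemma lebesgue_number C : (forall U, C U -> open U) -> \bigcup_(U in C) U = setT ->
  exists2 d, 0 < d & is_lebesgue_number C d.
Proof.
move=> oC covC; pose P d x := exists2 U, C U & ball x d `<=` U.
(* Near-covering form of compactness: a radius that works on a neighbourhood of
   each point yields one that works everywhere. *)
have : \forall d \near 0^'+, [set: T] `<=` P d.
  have /compact_near_coveringP/(_ R (0^'+) P _) := compactT; apply => x _.
  have : setT x by []; rewrite -covC => -[U CU Ux].
  have /nbhs_ballP[r r_gt0 rU] : nbhs x U.
    by apply: open_nbhs_nbhs; split => //; exact: oC.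
  have r2_gt0 : 0 < r / 2 by rewrite divr_gt0.
  exists (ball x (r / 2), [set d | 0 < d < r / 2]).
    split; first exact: nbhsx_ballx.
    exists (r / 2) => //= d + d_gt0.
    by rewrite /ball_ /= sub0r normrN gtr0_norm // d_gt0.
  move=> [y d] /= [xy /andP[d_gt0 dr]]; exists U => // z yz.
  by apply: rU; apply: ball_split xy (le_ball (x := y) (ltW dr) yz).
move=> Pnear; have : \forall d \near 0^'+, 0 < d /\ [set: T] `<=` P d.
  by near=> d; split; [near: d; exact: nbhs_right_gt | near: d; exact: Pnear].
by move=> /filter_ex[d [d_gt0 dP]]; exists d => // x; exact: dP.
Unshelve. all: by end_near.
Qed.

Lemma finite_net r : 0 < r ->
  exists p (c : 'I_p -> T), forall x, exists j, ball (c j) r x.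
Proof.
move=> r_gt0; pose B (s0 : seq T) := [set s : seq T | {subset s0 <= s}].
have FB : Filter (filter_from [set: seq T] B).
  apply: filter_from_filter; first by exists [::].
  move=> s1 s2 _ _; exists (s1 ++ s2) => // s /= s12s.
  by split => x xs; apply: s12s; rewrite mem_cat xs ?orbT.
have [s0 _ s0P] : filter_from [set: seq T] B
    (fun s => [set: T] `<=` (fun x => exists2 y, y \in s & ball y r x)).
  have /compact_near_coveringP/(_ _ _ _ FB) := compactT; apply => x _.
  exists (ball x r, B [:: x]); first by split; [exact: nbhsx_ballx | exists [:: x]].
  by move=> [y s] /= [xy xs]; exists x => //; apply: xs; rewrite inE.
exists (size s0), (fun j => tnth (in_tuple s0) j) => x.
have [y ys yx] := s0P s0 (fun _ => id) x I.
by exists (Ordinal (etrans (index_mem y s0) ys)); rewrite (tnth_nth y) /= nth_index.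
Qed.

Lemma small_open_cover r : 0 < r ->
  exists2 C, open_cover C & forall U, C U -> diam_lt r U.
Proof.
move=> r_gt0; have r2_gt0 : 0 < r / 2 by rewrite divr_gt0.
have r4_gt0 : 0 < r / 2 / 2 by rewrite divr_gt0.
have [p [c cP]] := finite_net r4_gt0.
exists [set (ball (c j) (r / 2))° | j in [set: 'I_p]]; last first.
  move=> _ [j _ <-] y y' /interior_subset cy /interior_subset cy'.
  exact: ball_splitr cy cy'.
split; first exact: finite_image finite_finset.
split; first by move=> _ [j _ <-]; exact: open_interior.
apply/seteqP; split => // x _; have [j cx] := cP x.
exists (ball (c j) (r / 2))°; first by exists j.
by apply: filterS (nbhsx_ballx x _ r4_gt0) => y; exact: ball_split.
Qed.

Section CompactOrbits.
Variables (g : nat -> T -> T) (n : nat).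

Lemma orbit_join_subcover C : open_cover C ->
  exists (J : finType) (E : J -> set T), subcover (orbit_join g n C) E.
Proof.
move=> [_ [oC covC]]; have [d d_gt0 Cd] := lebesgue_number oC covC.
have [p [c cP]] := finite_net (divr_gt0 d_gt0 (ltr0n _ 2)).
pose D (tau : {ffun 'I_n -> 'I_p}) :=
  [set y | forall o : 'I_n, ball (c (tau o)) (d / 2) (g o y)].
have Dd tau : orbit_diam_lt g n d (D tau).
  by move=> y y' Dy Dy' i ilt; exact: ball_splitr (Dy (Ordinal ilt)) (Dy' (Ordinal ilt)).
have DT x : exists tau, D tau x by exact: orbit_itinerary.
by have [J [E [JE _]]] := orbit_join_refinement Cd DT Dd; exists J, E.
Qed.

Lemma cover_num_orbit_join_attained C : open_cover C ->
  exists m, cover_num R (orbit_join g n C) = m%:R /\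
            exists D : 'I_m -> set T, subcover (orbit_join g n C) D.
Proof. by move=> /orbit_join_subcover; exact: cover_num_attained. Qed.

Lemma cover_num_orbit_join_natr C : open_cover C ->
  cover_num R (orbit_join g n C) \is a Num.nat.
Proof. by move=> /cover_num_orbit_join_attained[m [-> _]]; exact: natr_nat. Qed.

Lemma card_le_cover_num_orbit_join C r (I : finType) (E : I -> T) :
  open_cover C -> (forall U, C U -> diam_lt r U) -> orbit_separated g n r E ->
  #|I|%:R <= cover_num R (orbit_join g n C).
Proof.
move=> oC Cr Esep; have [m [-> [D [CD DT]]]] := cover_num_orbit_join_attained oC.
have [t tP] := choice (fun s => DT (E s)).
suff t_inj : injective t by rewrite ler_nat -[m]card_ord; exact: leq_card t_inj.
move=> s s' t_ss'; apply: Esep; apply: orbit_join_diam Cr (CD (t s)) _ _ (tP s) _.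
by rewrite t_ss'.
Qed.

Lemma maximal_orbit_separated r : 0 < r ->
  exists e (E : 'I_e -> T),
    orbit_separated g n r E /\ forall x, exists s, orbit_close g n r (E s) x.
Proof.
move=> r_gt0; have [p [c cP]] := finite_net (divr_gt0 r_gt0 (ltr0n _ 2)).
pose P e := `[< exists E : 'I_e -> T, orbit_separated g n r E >].
have P0 : exists e, P e.
  by exists 0%N; apply/asboolP; exists (ffun0 (card_ord 0)) => -[].
have P_bounded e : P e -> (e <= p ^ n)%N.
  move=> /asboolP[E Esep]; rewrite -[e]card_ord.
  exact: orbit_separated_card_le cP Esep.
have [e /asboolP[E Esep] e_max] := ex_maxnP P0 P_bounded.
exists e, E; split => // x; apply: contrapT => Ex.
pose E' (s : 'I_e.+1) := if unlift ord_max s is Some s' then E s' else x.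
suff : P e.+1 by move/e_max; rewrite ltnn.
apply/asboolP; exists E' => s t; rewrite /E'.
case: unliftP => [s'|] ->; case: unliftP => [t'|] -> // st.
- by congr lift; exact: Esep.
- by case: Ex; exists s'.
- by case: Ex; exists t'; exact: orbit_close_sym.
Qed.

End CompactOrbits.
End PseudoMetric.

Section RowVectors.
Context (R : realType) (X : pseudoMetricType R) (k : nat) (g : nat -> X -> X).
Local Notation M := 'rV[X]_k.
Local Notation gk := (fun i => @map_mx X X (g i) 1 k).

Lemma ball_rV (x y : M) e :
  ball x e y <-> 0 < e /\ forall j, ball (x ord0 j) e (y ord0 j).
Proof. by split=> -[e_gt0 xy]; split=> // i j; rewrite (ord1 i); exact: xy. Qed.

Lemma orbit_close_rV n r (x y : M) : 0 < r ->
  orbit_close gk n r x y <-> forall j, orbit_close g n r (x ord0 j) (y ord0 j).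
Proof.
move=> r_gt0; split=> [xy j i ilt | xy i ilt].
  by have /ball_rV[_ /(_ j)] := xy i ilt; rewrite !mxE.
by apply/ball_rV; split=> // j; rewrite !mxE; exact: xy.
Qed.

Hypotheses (compactX : compact [set: X]) (k_gt0 : (0 < k)%N).
Let compactM : compact [set: M] := compact_rV k_gt0 compactX.

Lemma cover_num_orbit_join_rV_le W : open_cover W ->
  exists2 C, open_cover C & forall n,
    cover_num R (orbit_join gk n W) <= cover_num R (orbit_join g n C) ^+ k.
Proof.
move=> [_ [oW covW]]; have [d d_gt0 Wd] := lebesgue_number compactM oW covW.
have [C oC Cd] := small_open_cover compactX d_gt0; exists C => // n.
have [m [-> [D [CD DT]]]] := cover_num_orbit_join_attained compactX g n oC.
pose E (tau : {ffun 'I_k -> 'I_m}) := [set y : M | forall j, D (tau j) (y ord0 j)].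
have -> : m%:R ^+ k = #|{ffun 'I_k -> 'I_m}|%:R :> R.
  by rewrite card_ffun !card_ord natrX.
apply: (cover_num_orbit_join_le (D := E) Wd) => [y | tau y y' Ey Ey'].
  have [tau tauP] := choice (fun j => DT (y ord0 j)).
  by exists [ffun j => tau j] => j; rewrite ffunE.
apply/orbit_close_rV => // j.
exact: orbit_join_diam Cd (CD (tau j)) _ _ (Ey j) (Ey' j).
Qed.

Lemma cover_num_orbit_join_rV_ge C : open_cover C ->
  exists2 B, open_cover B & forall n,
    cover_num R (orbit_join g n C) ^+ k <= cover_num R (orbit_join gk n B).
Proof.
move=> oC; have [_ [oC' covC]] := oC.
have [d d_gt0 Cd] := lebesgue_number compactX oC' covC.
have d2_gt0 : 0 < d / 2 by rewrite divr_gt0.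
have [B oB Bd] := small_open_cover compactM d2_gt0; exists B => // n.
have [e [E [Esep Espan]]] := maximal_orbit_separated compactX g n d2_gt0.
have CE : cover_num R (orbit_join g n C) <= e%:R.
  rewrite -[e in e%:R]card_ord.
  apply: (cover_num_orbit_join_le (D := fun s => orbit_close g n (d / 2) (E s)) Cd) => //.
  by move=> s y y'; exact: orbit_close_splitr.
have EB : (e ^ k)%:R <= cover_num R (orbit_join gk n B).
  have -> : (e ^ k)%N = #|{ffun 'I_k -> 'I_e}| by rewrite card_ffun !card_ord.
  apply: (card_le_cover_num_orbit_join compactM
    (E := fun s : {ffun 'I_k -> 'I_e} => \row_j E (s j)) oB Bd).
  move=> s t /orbit_close_rV st; apply/ffunP => j; apply: Esep.
  by have := st d2_gt0 j; rewrite !mxE.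
apply: le_trans EB; rewrite natrX lerXn2r ?nnegrE ?ler0n //.
exact/natr_ge0/(cover_num_orbit_join_natr compactX).
Qed.

End RowVectors.

Section Entropy.
Context (R : realType).

Definition orbit_entropy (T : topologicalType) (g : nat -> T -> T) : \bar R :=
  ereal_sup [set limn_esup (fun n =>
    (ln (cover_num R (orbit_join g n C)) / n%:R)%:E) | C in @open_cover T].

Lemma seq_entropyE (T : topologicalType) (f : nat -> T -> T) (a : nat -> nat) :
  seq_entropy R f a = orbit_entropy (fun i => fiter f (a i)).
Proof. by []. Qed.

Lemma ln_le_natr (x y : R) : x \is a Num.nat -> y \is a Num.nat ->
  x <= y -> ln x <= ln y.
Proof.
move=> /natrP[m ->] /natrP[m' ->]; rewrite ler_nat.
case: m => [|m] mm'; last by rewrite ler_ln ?posrE ?ltr0n ?ler_nat // (leq_trans _ mm').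
case: m' mm' => [|m'] _; first by rewrite ln0.
by rewrite (ln0 (lexx 0)) ln_ge0 // ler1n.
Qed.

(* Also true at [x = 0], since [ln 0 = 0]. *)
Lemma ln_exprn (x : R) k : 0 <= x -> ln (x ^+ k) = k%:R * ln x.
Proof.
rewrite le_eqVlt => /predU1P[<-|x_gt0]; last by rewrite lnXn // mulr_natl.
by case: k => [|k]; rewrite ?expr0 ?ln1 ?mul0r // expr0n /= ln0 // mulr0.
Qed.

Lemma ln_le_exprn_natr (x y : R) k : x \is a Num.nat -> y \is a Num.nat ->
  x <= y ^+ k -> ln x <= k%:R * ln y.
Proof.
move=> x_nat y_nat xy; rewrite -ln_exprn ?natr_ge0 //.
by apply: ln_le_natr xy; rewrite ?rpredX.
Qed.

Lemma ln_exprn_natr_le (x y : R) k : x \is a Num.nat -> y \is a Num.nat ->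
  y ^+ k <= x -> k%:R * ln y <= ln x.
Proof.
move=> x_nat y_nat yx; rewrite -ln_exprn ?natr_ge0 //.
by apply: ln_le_natr yx; rewrite ?rpredX.
Qed.

Lemma limn_esup_le_scale (u v : nat -> \bar R) (r : R) : 0 < r ->
  (forall n, (u n <= r%:E * v n)%E) -> (limn_esup u <= r%:E * limn_esup v)%E.
Proof.
move=> r_gt0 uv; rewrite /limn_esup !limf_esupE -ereal_inf_pZl //.
apply: le_ereal_inf_tmp => _ [_ [V FV <-] <-].
apply: le_trans (ereal_inf_lbound _) _; first by exists V.
rewrite -ereal_sup_pZl //; apply: ge_ereal_sup => _ [n Vn <-].
by apply: le_trans (uv n) _; apply: ereal_sup_ubound; exists (v n).
Qed.

Lemma orbit_entropy_le_scale (T1 T2 : topologicalType)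
    (g1 : nat -> T1 -> T1) (g2 : nat -> T2 -> T2) (r : R) : 0 < r ->
  (forall W, open_cover W -> exists2 C, open_cover C & forall n,
     ln (cover_num R (orbit_join g1 n W)) <= r * ln (cover_num R (orbit_join g2 n C))) ->
  (orbit_entropy g1 <= r%:E * orbit_entropy g2)%E.
Proof.
move=> r_gt0 WC; apply: ge_ereal_sup => _ [W oW <-]; have [C oC WCn] := WC W oW.
apply: le_trans (lee_wpmul2l _ (ereal_sup_ubound _)); last by exists C.
  apply: limn_esup_le_scale => // n; rewrite -EFinM lee_fin mulrA.
  by apply: ler_wpM2r (WCn n); rewrite invr_ge0.
by rewrite lee_fin ltW.
Qed.

Lemma orbit_entropy_rV (X : pseudoMetricType R) (g : nat -> X -> X) k :
  compact [set: X] -> (0 < k)%N ->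
  orbit_entropy (fun i => @map_mx X X (g i) 1 k) = (k%:R%:E * orbit_entropy g)%E.
Proof.
move=> cX k_gt0; have cM := compact_rV k_gt0 cX.
have k_gt0' : 0 < k%:R :> R by rewrite ltr0n.
apply/le_anti/andP; split.
  apply: orbit_entropy_le_scale => // W oW.
  have [C oC WC] := cover_num_orbit_join_rV_le g cX k_gt0 oW; exists C => // n.
  apply: ln_le_exprn_natr (WC n).
    exact: (cover_num_orbit_join_natr cM).
  exact: (cover_num_orbit_join_natr cX).
rewrite -lee_pdivlMl //; apply: orbit_entropy_le_scale; first by rewrite invr_gt0.
move=> C oC; have [B oB CB] := cover_num_orbit_join_rV_ge g cX k_gt0 oC.
exists B => // n; rewrite ler_pdivlMl //; apply: ln_exprn_natr_le (CB n).
  exact: (cover_num_orbit_join_natr cM).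
exact: (cover_num_orbit_join_natr cX).
Qed.

End Entropy.

Lemma fiter_map_mx (X : topologicalType) (f : nat -> X -> X) m k :
  fiter (fun n => @map_mx X X (f n) m k) = fun p => map_mx (fiter f p).
Proof.
apply/funext => p; apply/funext => x; apply/matrixP => i j; rewrite mxE.
by elim: p => //= p IHp; rewrite !mxE IHp.
Qed.

Theorem lemma3p5 (R : realType) (X : metricType R) (f : nat -> X -> X)
    (a : nat -> nat) (k : nat) :
  compact [set: X] ->
  (forall n, continuous (f n)) ->
  {homo a : m n / (m < n)%N} ->
  (0 < k)%N ->
  seq_entropy R (fun n => @map_mx X X (f n) 1 k) a
    = ((k%:R)%:E * seq_entropy R f a)%E.
Proof.
move=> cX _ _ k_gt0.
by rewrite !seq_entropyE fiter_map_mx; exact: orbit_entropy_rV.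
Qed.
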